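(* Let $\xi$ be a DoS sequence that is not an edge case, and let $\hat{B}_d(t)$ and $\hat{B}_f(t)$ be generated by the DoS estimator with parameters $2\leqslant \ell\in\mathbb{N}_+$, $0<\epsilon_0<1$, $0<\theta<1$. Then there exists a finite $T\geqslant 0$ such that $\hat{B}_d(t)\in\mathcal{D}(\xi)$ and $\hat{B}_f(t)\in\mathcal{F}(\xi)$ for all $t\geqslant T$.
   Context: A DoS sequence $\xi=\{H_n\}$ is a finite or infinite sequence of sets $H_n := \{h_n\}\cup[h_n,h_n+\tau_n)$, where $h_1\geqslant 0$, $\tau_n\geqslant 0$ and $h_{n+1} > h_n+\tau_n$ for all $n$. If $\xi$ has only $m$ elements, the convention $h_{n}=h_{n}+\tau_{n}=+\infty$ for $n>m$ is used. For $0\leqslant \tau\leqslant s$ let $\Xi(\tau,s) := \bigcup_n H_n\cap[\tau,s]$ and $n_\xi(\tau,s) := \operatorname{card}(\{h_n\}_n\cap[\tau,s])$; $\lvert\cdot\rvert$ denotes Lebesgue measure. A constant $B_d\in[0,1]$ is a duration-bound of $\xi$ if there is a constant $0<\kappa<+\infty$ with $\lvert \Xi(0,t)\rvert\leqslant \kappa + B_d t$ for all $t\geqslant 0$. A constant $B_f\in[0,+\infty)$ is a frequency-bound of $\xi$ if there is an integer $0<\Lambda<+\infty$ with $n_\xi(0,t)\leqslant \Lambda + B_f t$ for all $t\geqslant 0$; if no such finite $B_f$ exists, the frequency-bound is defined to be $+\infty$. $\mathcal{D}(\xi)$ and $\mathcal{F}(\xi)$ denote the sets of all duration-bounds and frequency-bounds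 of $\xi$. $\xi$ is an edge case if (i) $\inf\mathcal{D}(\xi)=1$, or (ii) $\inf\mathcal{F}(\xi)=+\infty$, or (iii) for every $\Gamma\in(0,+\infty)$ there is $n$ with $\tau_n>\Gamma$. DoS estimator: with $B_d(i) := \frac{\lvert \Xi(0,h_i+\tau_i)\rvert}{h_i+\tau_i}$ and $B_f(i) := \frac{i}{h_i}$, $\hat B_d(t) = \epsilon_0$ for $t\in[0,h_\ell+\tau_\ell)$ and $\hat B_d(t) = \max_{\ell\leqslant i\leqslant n}\{\epsilon_0,\ \theta B_d(i)+(1-\theta)\}$ for $t\in[h_n+\tau_n, h_{n+1}+\tau_{n+1})$, $n\geqslant \ell$; $\hat B_f(t) = \epsilon_0$ for $t\in[0,h_\ell)$ and $\hat B_f(t) = \max_{\ell\leqslant i\leqslant n}\{\epsilon_0,\ B_f(i)/\theta\}$ for $t\in[h_n,h_{n+1})$, $n\geqslant\ell$. *)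

From HB Require Import structures.
From mathcomp Require Import all_boot all_order all_algebra.
From mathcomp Require Import finmap.
From mathcomp Require Import all_classical all_reals all_analysis.
Set Implicit Arguments. Unset Strict Implicit. Unset Printing Implicit Defensive.
Import Order.TTheory GRing.Theory Num.Theory.
Local Open Scope classical_set_scope.
Local Open Scope ring_scope.

(* A DoS sequence is encoded by its length [len] (Some m: m elements,
   None: infinitely many) and two real sequences h, tau, indexed from 1.
   Values of h, tau outside the valid index range are irrelevant
   (the paper's convention h_n = +oo for n > m is realised by never
   using such indices). *)
Definition in_seq (len : option nat) (n : nat) : bool :=
  (0 < n)%N && (if len is Some m then (n <= m)%N else true).

Section DoS.
Variables (R : realType) (len : option nat) (h tau : nat -> R).

Definition DoS_seq : Prop :=
  (in_seq len 1 -> 0 <= h 1) /\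
  (forall n, in_seq len n -> 0 <= tau n) /\
  (forall n, in_seq len n.+1 -> h n + tau n < h n.+1).

Definition Hset (n : nat) : set R := [set h n] `|` `[h n, h n + tau n[.

Definition Xi (a s : R) : set R :=
  [set x | exists2 n, in_seq len n & Hset n x] `&` `[a, s].

Definition hpts (a s : R) : set R :=
  [set x | exists2 n, in_seq len n & x = h n] `&` `[a, s].
Definition n_xi (a s : R) : \bar R :=
  if pselect (finite_set (hpts a s)) then ((#|` fset_set (hpts a s)|)%fset%:R)%:E
  else +oo%E.

Definition DurBounds : set R :=
  [set Bd | 0 <= Bd <= 1 /\ exists2 kappa : R, 0 < kappa &
     forall t : R, 0 <= t -> (lebesgue_measure (Xi 0 t) <= (kappa + Bd * t)%:E)%E].

Definition finFreqBound (Bf : R) : Prop :=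
  0 <= Bf /\ exists2 Lambda : nat, (0 < Lambda)%N &
     forall t : R, 0 <= t -> (n_xi 0 t <= (Lambda%:R + Bf * t)%:E)%E.

Definition FreqBounds : set (\bar R) :=
  if pselect (exists Bf, finFreqBound Bf) then [set Bf%:E | Bf in finFreqBound]
  else [set +oo%E].

Definition edge_case : Prop :=
  inf DurBounds = 1 \/ ereal_inf FreqBounds = +oo%E \/
  (forall Gamma : R, 0 < Gamma -> exists2 n, in_seq len n & Gamma < tau n).

Definition ends (n : nat) : R := h n + tau n.

Definition Bd_i (i : nat) : R := fine (lebesgue_measure (Xi 0 (ends i))) / ends i.
Definition Bf_i (i : nat) : R := i%:R / h i.

(* the index n with t in [h_n+tau_n, h_{n+1}+tau_{n+1}) (upper end +oo if
   n is the last element); 0 if there is none *)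
Definition idx_d (t : R) : nat :=
  xget 0%N [set n | in_seq len n /\ ends n <= t /\ (in_seq len n.+1 -> t < ends n.+1)].
Definition idx_f (t : R) : nat :=
  xget 0%N [set n | in_seq len n /\ h n <= t /\ (in_seq len n.+1 -> t < h n.+1)].

Variables (l : nat) (eps0 theta : R).

Definition Bd_hat (t : R) : R :=
  if (l <= idx_d t)%N then
    \big[Num.max/eps0]_(l <= i < (idx_d t).+1) (theta * Bd_i i + (1 - theta))
  else eps0.

Definition Bf_hat (t : R) : R :=
  if (l <= idx_f t)%N then
    \big[Num.max/eps0]_(l <= i < (idx_f t).+1) (Bf_i i / theta)
  else eps0.
End DoS.

(* Finitely many attacks keep both the attacked measure and the attack count
   bounded, so every value of the estimator is a bound.  Otherwise, not being
   an edge case provides a duration bound B < 1, a finite frequency bound and a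
   uniform bound G on the tau_n; the frequency bound forces h_n -> +oo, so every
   late t lies in a unique window [h_n, h_{n+1}) (resp. [h_n + tau_n,
   h_{n+1} + tau_{n+1})), which is what the estimator indexes.
   The ratios B_d(i) eventually stay below (1 + B)/2, so S_d := sup_{i >= N}
   B_d(i) < 1 and a single index i with B_d(i) close enough to S_d gives
   theta B_d(i) + 1 - theta >= S_d: the estimator stays above S_d once t passes
   h_i + tau_i.  Every B in [S_d, 1] is a duration bound, because up to a time t
   in the window of n the attacked measure is at most
   B_d(n) (h_n + tau_n) + tau_{n+1} <= B t + G.  Likewise
   S_f := sup_{i >= l} B_f(i) is finite and positive, some j has
   B_f(j) / theta >= S_f, and every B >= S_f is a frequency bound since
   n = B_f(n) h_n <= B t for each attack h_n <= t with n >= l. *)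

From HB Require Import structures.
From mathcomp Require Import all_boot all_order all_algebra.
From mathcomp Require Import all_classical all_reals all_analysis.
From mathcomp Require Import lra.
Import Order.TTheory GRing.Theory Num.Theory.
Local Open Scope classical_set_scope.
Local Open Scope ring_scope.
Set Implicit Arguments. Unset Strict Implicit. Unset Printing Implicit Defensive.

Lemma in_seq_le (len : option nat) i j :
  (0 < i)%N -> (i <= j)%N -> in_seq len j -> in_seq len i.
Proof.
rewrite /in_seq => i0 ij /andP[_]; rewrite i0.
by case: len => // m; exact: leq_trans.
Qed.

Section Window.
Variables (R : realType) (len : option nat) (a : nat -> R).
Hypothesis a_homo :
  forall i j, in_seq len i -> in_seq len j -> (i <= j)%N -> a i <= a j.

Definition window (t : R) (n : nat) : Prop :=
  in_seq len n /\ a n <= t /\ (in_seq len n.+1 -> t < a n.+1).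

Lemma window_uniq t m n : window t m -> window t n -> m = n.
Proof.
suff window_ltF p q : (p < q)%N -> window t p -> window t q -> False.
  move=> wm wn; case: (ltngtP m n) => // [mn|nm].
  - by case: (window_ltF m n).
  - by case: (window_ltF n m).
move=> pq [vp [_ tp1]] [vq [aqt _]].
have vp1 : in_seq len p.+1 by exact: in_seq_le vq.
by have := lt_le_trans (tp1 vp1) (le_trans (a_homo vp1 vq pq) aqt); rewrite ltxx.
Qed.

Lemma xget_window t n : window t n -> xget 0%N [set k | window t k] = n.
Proof.
by move=> wtn; apply: (window_uniq _ wtn); exact: (xgetPex 0%N (ex_intro _ n wtn)).
Qed.

Lemma xget_window_gt0 t : (0 < xget 0%N [set k | window t k])%N ->
  window t (xget 0%N [set k | window t k]).
Proof. by case: xgetP. Qed.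

Lemma window_exists k t : in_seq len k -> a k <= t ->
  (exists2 M, in_seq len M & t < a M) -> exists2 n, (k <= n)%N & window t n.
Proof.
move=> vk akt [M vM tM].
have exP : exists j, [&& (k < j)%N, in_seq len j & t < a j].
  exists M; rewrite vM tM !andbT ltnNge; apply/negP => Mk.
  by have := le_trans (a_homo vM vk Mk) akt; rewrite leNgt tM.
(* the window index n is such that n.+1 is the least j > k with t < a j *)
case: (ex_minnP exP) => + /and3P[] => -[//|n]; rewrite ltnS => kn vn1 tn1 minN.
have vn : in_seq len n.
  by apply: in_seq_le vn1 => //; apply: leq_trans kn; case/andP: vk.
exists n => //; split=> //; split=> //.
move: kn; rewrite leq_eqVlt => /orP[/eqP<-//|kn].
by rewrite leNgt; apply/negP => tn; have := minN n; rewrite kn vn tn ltnn => /(_ isT).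
Qed.

End Window.

Lemma lebesgue_measure_sub_itv (R : realType) (A : set R) (a b : R) :
  measurable A -> A `<=` `[a, b] -> a <= b -> (lebesgue_measure A <= (b - a)%:E)%E.
Proof.
move=> mA Aab ab; apply: (@le_trans _ _ (lebesgue_measure `[a, b])).
  by apply: le_measure; rewrite ?inE //; exact: measurable_itv.
rewrite lebesgue_measure_itv /= lte_fin; case: ltP => // ba.
by rewrite lee_fin subr_ge0.
Qed.

Section DoSSequence.
Variables (R : realType) (len : option nat) (h tau : nat -> R).
Hypothesis dos : DoS_seq len h tau.
Local Notation ends := (ends h tau).
Local Notation mu t := (lebesgue_measure (Xi len h tau 0 t)).

Lemma tau_ge0 n : in_seq len n -> 0 <= tau n.
Proof. by case: dos => _ [+ _]; apply. Qed.

Lemma h_le_ends n : in_seq len n -> h n <= ends n.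
Proof. by move/tau_ge0; rewrite /ends lerDl. Qed.

Lemma ends_lt_h i j : (0 < i)%N -> (i < j)%N -> in_seq len j -> ends i < h j.
Proof.
have ends_lt_next n : in_seq len n.+1 -> ends n < h n.+1 by case: dos => _ [_]; apply.
move=> i0; elim: j => [//|j IH]; rewrite ltnS leq_eqVlt => /orP[/eqP<-|ij vj1].
  exact: ends_lt_next.
have vj : in_seq len j by apply: in_seq_le vj1 => //; exact: leq_trans ij.
exact: lt_trans (IH ij vj) (le_lt_trans (h_le_ends vj) (ends_lt_next _ vj1)).
Qed.

Lemma h_lt i j : (0 < i)%N -> (i < j)%N -> in_seq len j -> h i < h j.
Proof.
move=> i0 ij vj; apply: le_lt_trans (ends_lt_h i0 ij vj).
by apply/h_le_ends/(in_seq_le i0 (ltnW ij)).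
Qed.

Lemma h_homo i j : in_seq len i -> in_seq len j -> (i <= j)%N -> h i <= h j.
Proof.
move=> /andP[i0 _] vj; rewrite leq_eqVlt => /orP[/eqP->//|ij].
exact/ltW/h_lt.
Qed.

Lemma ends_homo i j : in_seq len i -> in_seq len j -> (i <= j)%N -> ends i <= ends j.
Proof.
move=> /andP[i0 _] vj; rewrite leq_eqVlt => /orP[/eqP->//|ij].
exact/ltW/(lt_le_trans (ends_lt_h i0 ij vj) (h_le_ends vj)).
Qed.

Lemma h_ge0 n : in_seq len n -> 0 <= h n.
Proof.
move=> vn; have n0 : (0 < n)%N by case/andP: vn.
have v1 : in_seq len 1 by exact: in_seq_le vn.
by apply: le_trans (h_homo v1 vn n0); case: dos => + _; apply.
Qed.

Lemma h_gt0 n : in_seq len n -> (1 < n)%N -> 0 < h n.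
Proof.
move=> vn n1; have v1 : in_seq len 1 by apply: in_seq_le vn => //; exact: ltnW.
apply: le_lt_trans (ends_lt_h _ n1 vn) => //.
exact: le_trans (h_ge0 v1) (h_le_ends v1).
Qed.

Lemma ends_gt0 n : in_seq len n -> (1 < n)%N -> 0 < ends n.
Proof. by move=> vn n1; apply: lt_le_trans (h_gt0 vn n1) (h_le_ends vn). Qed.

Lemma measurable_Xi a s : measurable (Xi len h tau a s).
Proof.
apply: measurableI; last exact: measurable_itv.
rewrite [X in measurable X]
  (_ : _ = \bigcup_(n in [set n | in_seq len n]) Hset h tau n).
  apply: bigcup_measurable => n _.
  by apply: measurableU; [exact: measurable_set1 | exact: measurable_itv].
by apply/seteqP; split=> x [n vn Hx]; exists n.
Qed.

Lemma mu_le_sub_cc t K :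
  Xi len h tau 0 t `<=` `[0, K] -> 0 <= K -> (mu t <= K%:E)%E.
Proof.
move=> XK K0; rewrite -[K]subr0.
exact: lebesgue_measure_sub_itv (measurable_Xi _ _) XK K0.
Qed.

Lemma mu_le t : 0 <= t -> (mu t <= t%:E)%E.
Proof. by apply: mu_le_sub_cc => x []. Qed.

Lemma mu_fin_num t : 0 <= t -> mu t \is a fin_num.
Proof.
by move=> t0; rewrite ge0_fin_numE ?measure_ge0 // (le_lt_trans (mu_le t0)) ?ltry.
Qed.

Lemma fine_mu_le t x : 0 <= t -> (mu t <= x%:E)%E -> fine (mu t) <= x.
Proof. by move=> t0 mux; rewrite -lee_fin fineK ?mu_fin_num. Qed.

Lemma Hset_bounds k x : in_seq len k -> Hset h tau k x -> h k <= x <= ends k.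
Proof.
move=> vk [/= ->|/=]; first by rewrite lexx h_le_ends.
by rewrite in_itv /= => /andP[-> /ltW].
Qed.

Lemma Xi_sub_window t n : (0 < n)%N -> in_seq len n.+1 ->
  ends n <= t -> t < ends n.+1 ->
  Xi len h tau 0 t `<=` Xi len h tau 0 (ends n) `|` `[h n.+1, ends n.+1[.
Proof.
move=> n0 vn1 nt tn1 x [[k vk Hx]] /=; rewrite in_itv /= => /andP[x0 xt].
have /andP[hkx xek] := Hset_bounds vk Hx.
case: (ltngtP k n.+1) => [kn|kn|kn].
- left; split; first by exists k.
  by rewrite /= in_itv /= x0 (le_trans xek) // ends_homo // (in_seq_le n0 _ vn1).
- by have := ends_lt_h (ltn0Sn n) kn vk; lra.
- by right; rewrite /= in_itv /= -kn hkx /= kn; lra.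
Qed.

Lemma mu_le_window t n : (0 < n)%N -> in_seq len n.+1 ->
  ends n <= t -> t < ends n.+1 -> (mu t <= mu (ends n) + (tau n.+1)%:E)%E.
Proof.
move=> n0 vn1 nt tn1.
apply: (@le_trans _ _ (lebesgue_measure
    (Xi len h tau 0 (ends n) `|` `[h n.+1, ends n.+1[))).
  apply: le_measure; last exact: Xi_sub_window.
  - by rewrite inE; exact: measurable_Xi.
  - by rewrite inE; apply: measurableU; [exact: measurable_Xi | exact: measurable_itv].
apply: (le_trans (measureU2 _ _ _)); [exact: measurable_Xi | exact: measurable_itv |].
apply: leeD => //.
change (lebesgue_measure (`[h n.+1, ends n.+1[ : set R) <= (tau n.+1)%:E)%E.
rewrite lebesgue_measure_itv /= lte_fin.
by case: ltP => _; rewrite ?lee_fin ?tau_ge0 // /ends addrAC subrr add0r.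
Qed.

Lemma mu_le_last m t : len = Some m -> (mu t <= (Num.max 0 (ends m))%:E)%E.
Proof.
move=> len_m; apply: mu_le_sub_cc; last by rewrite le_max lexx.
move=> x [[k vk Hx]] /=; rewrite !in_itv /= => /andP[x0 _]; rewrite x0 le_max /=.
have [k0 km] : (0 < k)%N /\ (k <= m)%N by move: vk; rewrite /in_seq len_m => /andP.
have vm : in_seq len m by rewrite /in_seq len_m leqnn (leq_trans k0 km).
have /andP[_ xek] := Hset_bounds vk Hx.
by rewrite (le_trans xek (ends_homo vk vm km)) orbT.
Qed.

Lemma n_xi_le x t : 0 <= x -> (forall n, in_seq len n -> h n <= t -> n%:R <= x) ->
  (n_xi len h 0 t <= x%:E)%E.
Proof.
move=> x0 hx; set k := Num.truncn x.
apply: (@le_trans _ _ (k%:R)%:E); last by rewrite lee_fin truncn_le.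
have sub : hpts len h 0 t `<=` (fun j => h j.+1) @` `I_k.
  move=> _ [[n vn ->]] /=; rewrite in_itv /= => /andP[_ hnt].
  have n0 : (0 < n)%N by case/andP: vn.
  exists n.-1; last by rewrite prednK.
  by rewrite /= prednK // truncn_ge_nat // hx.
have hpts_fin : finite_set (hpts len h 0 t).
  exact: (sub_finite_set sub (finite_image _ (finite_II k))).
rewrite /n_xi; case: pselect => [fin|/(_ hpts_fin)//]; rewrite lee_fin ler_nat.
apply: geq_card_fset_set.
exact: card_le_trans (subset_card_le sub) (card_image_le _ _).
Qed.

Lemma n_xi_ge n : in_seq len n -> ((n%:R)%:E <= n_xi len h 0 (h n))%E.
Proof.
move=> vn; rewrite /n_xi; case: pselect => [fin|nfin]; last by rewrite leey.
rewrite lee_fin ler_nat; apply: leq_card_fset_set => //.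
have inj : {in `I_n &, injective (fun j => h j.+1)}.
  move=> i j; rewrite !inE /= => ilt jlt hij.
  case: (ltngtP i j) => // ij; exfalso.
  - have := h_lt (ltn0Sn i) (ij : (i.+1 < j.+1)%N) (in_seq_le (ltn0Sn j) jlt vn).
    by rewrite hij ltxx.
  - have := h_lt (ltn0Sn j) (ij : (j.+1 < i.+1)%N) (in_seq_le (ltn0Sn i) ilt vn).
    by rewrite hij ltxx.
rewrite -(card_le_eql (inj_card_eq inj)).
apply: subset_card_le => _ [j /= jn <-].
have vj : in_seq len j.+1 by exact: in_seq_le vn.
split; first by exists j.+1.
by rewrite /= in_itv /= h_ge0 //= h_homo.
Qed.

Lemma index_le_freq_bound (L : nat) Bf n :
  (forall t, 0 <= t -> (n_xi len h 0 t <= (L%:R + Bf * t)%:E)%E) ->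
  in_seq len n -> n%:R <= L%:R + Bf * h n.
Proof. by move=> HL vn; rewrite -lee_fin (le_trans (n_xi_ge vn)) ?HL ?h_ge0. Qed.

Lemma fine_mu_ends i : in_seq len i -> (1 < i)%N ->
  fine (mu (ends i)) = Bd_i len h tau i * ends i.
Proof. by move=> vi i1; rewrite /Bd_i divfK // gt_eqF // ends_gt0. Qed.

Lemma Bd_i_ge0_le1 i : in_seq len i -> (1 < i)%N -> 0 <= Bd_i len h tau i <= 1.
Proof.
move=> vi i1; have e0 := ends_gt0 vi i1.
rewrite /Bd_i divr_ge0 ?fine_ge0 ?measure_ge0 ?(ltW e0) //= ler_pdivrMr // mul1r.
exact: fine_mu_le (ltW e0) (mu_le (ltW e0)).
Qed.

Lemma DurBounds_finite m B : len = Some m -> 0 <= B <= 1 -> DurBounds len h tau B.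
Proof.
move=> len_m /andP[B0 B1]; split; first by rewrite B0 B1.
have K0 : 0 <= Num.max 0 (ends m) by rewrite le_max lexx.
exists (Num.max 0 (ends m) + 1) => [|t t0]; first by rewrite ltr_wpDl.
apply: le_trans (mu_le_last t len_m) _.
by rewrite lee_fin -addrA lerDl addr_ge0 ?mulr_ge0.
Qed.

Lemma finFreqBound_finite m B : len = Some m -> 0 <= B -> finFreqBound len h B.
Proof.
move=> len_m B0; split=> //; exists m.+1 => // t t0.
have Bt0 := mulr_ge0 B0 t0.
apply: n_xi_le => [|n vn _]; first by rewrite addr_ge0.
have : (n <= m.+1)%N by move: vn; rewrite /in_seq len_m => /andP[_ /leqW].
by rewrite -(ler_nat R) => nm; apply: (le_trans nm); rewrite lerDl.
Qed.

Lemma finFreqBound_of_tail L B : (1 < L)%N -> 0 <= B ->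
  (forall k, in_seq len k -> (L <= k)%N -> Bf_i h k <= B) -> finFreqBound len h B.
Proof.
move=> L1 B0 BfB; split=> //; exists L => [|t t0]; first exact: ltnW.
have Bt0 := mulr_ge0 B0 t0.
apply: n_xi_le => [|n vn hnt]; first by rewrite addr_ge0.
case: (ltnP n L) => [nL|Ln].
  by apply: (@le_trans _ _ L%:R); rewrite ?lerDl // ler_nat ltnW.
have hn0 := h_gt0 vn (leq_trans L1 Ln).
have -> : n%:R = Bf_i h n * h n by rewrite /Bf_i divfK // gt_eqF.
apply: (@le_trans _ _ (B * t)); last by rewrite lerDr.
apply: ler_pM => //; last exact: BfB.
- by rewrite divr_ge0 // ltW.
- exact: ltW.
Qed.

End DoSSequence.

Lemma FreqBounds_of_finFreqBound (R : realType) (len : option nat) (h : nat -> R) B :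
  finFreqBound len h B -> FreqBounds len h B%:E.
Proof.
move=> fB; rewrite /FreqBounds; case: pselect => [ex|nex]; first by exists B.
by case: nex; exists B.
Qed.

Lemma not_edge_case (R : realType) (len : option nat) (h tau : nat -> R) :
  DoS_seq len h tau -> ~ edge_case len h tau ->
  [/\ exists2 B, DurBounds len h tau B & B < 1,
      exists Bf, finFreqBound len h Bf &
      exists G, forall n, in_seq len n -> tau n <= G].
Proof.
move=> dos nedge; split.
- have D1 : DurBounds len h tau 1.
    split; first by rewrite ler01 lexx.
    exists 1 => // t t0; rewrite mul1r (le_trans (mu_le len h tau t0)) //.
    by rewrite lee_fin lerDr.
  have D0 : lbound (DurBounds len h tau) 0 by move=> B [/andP[]].
  have infD1 : inf (DurBounds len h tau) < 1.
    rewrite lt_neqAle (ge_inf (ex_intro _ 0 D0) D1) andbT.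
    by apply/eqP => infD; apply: nedge; left.
  by have [B DB B1] := inf_lt (ex_intro _ 1 D1) infD1; exists B.
- apply: contrapT => nfin; apply: nedge; right; left.
  rewrite /FreqBounds; case: pselect => [[Bf fB]|nex]; last exact: ereal_inf1.
  by case: nfin; exists Bf.
- apply: contrapT => nG; apply: nedge; right; right => G G0.
  apply: contrapT => nlt; apply: nG; exists G => n vn.
  by rewrite leNgt; apply/negP => Gn; apply: nlt; exists n.
Qed.

Section Estimator.
Variables (R : realType) (len : option nat) (h tau : nat -> R).
Hypothesis dos : DoS_seq len h tau.
Variables (l : nat) (eps0 theta : R).
Local Notation ends := (ends h tau).

Lemma idx_dE t n : window len ends t n -> idx_d len h tau t = n.
Proof. exact: (xget_window (ends_homo dos)). Qed.

Lemma idx_fE t n : window len h t n -> idx_f len h t = n.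
Proof. exact: (xget_window (h_homo dos)). Qed.

Lemma Bd_hat_ge0_le1 t : (1 < l)%N -> 0 <= eps0 <= 1 -> 0 <= theta <= 1 ->
  0 <= Bd_hat len h tau l eps0 theta t <= 1.
Proof.
move=> l1 /andP[e0 e1] /andP[th0 th1]; rewrite /Bd_hat.
case: ifPn => [lidx|_]; last by rewrite e0.
have [vidx _] : window len ends t (idx_d len h tau t).
  exact: xget_window_gt0 (leq_trans (ltnW l1) lidx).
rewrite (le_trans e0 (bigmax_ge_id _ _ _ _)) /= big_seq; apply: bigmax_le => // i.
rewrite mem_index_iota ltnS => /andP[li iidx].
have vi := in_seq_le (leq_trans (ltnW l1) li) iidx vidx.
have /andP[b0 b1] := Bd_i_ge0_le1 dos vi (leq_trans l1 li).
nra.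
Qed.

Lemma Bd_hat_ge t n i : window len ends t n -> (l <= i <= n)%N ->
  theta * Bd_i len h tau i + (1 - theta) <= Bd_hat len h tau l eps0 theta t.
Proof.
move=> wtn /andP[li iN]; rewrite /Bd_hat (idx_dE wtn) (leq_trans li iN).
by apply: (le_bigmax_seq _ i); rewrite // mem_index_iota li ltnS.
Qed.

Lemma Bf_hat_ge0 t : 0 <= eps0 -> 0 <= Bf_hat len h l eps0 theta t.
Proof.
move=> e0; apply: le_trans e0 _; rewrite /Bf_hat.
by case: ifP => _; first exact: bigmax_ge_id.
Qed.

Lemma Bf_hat_ge t n i : window len h t n -> (l <= i <= n)%N ->
  Bf_i h i / theta <= Bf_hat len h l eps0 theta t.
Proof.
move=> wtn /andP[li iN]; rewrite /Bf_hat (idx_fE wtn) (leq_trans li iN).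
by apply: (le_bigmax_seq _ i); rewrite // mem_index_iota li ltnS.
Qed.

End Estimator.

Section InfiniteSequence.
Variables (R : realType) (len : option nat) (h tau : nat -> R).
Hypotheses (dos : DoS_seq len h tau) (len_inf : len = None).
Local Notation ends := (ends h tau).

Lemma in_seq_inf n : (0 < n)%N -> in_seq len n.
Proof. by rewrite /in_seq len_inf andbT. Qed.

Lemma h_unbounded Bf :
  finFreqBound len h Bf -> forall t, exists2 n, in_seq len n & t < h n.
Proof.
move=> [Bf0 [L _ HL]] t; set x := L%:R + Bf * `|t|.
have x0 : 0 <= x by rewrite addr_ge0 ?mulr_ge0.
set n := (Num.truncn x).+1; have vn := in_seq_inf (ltn0Sn (Num.truncn x)).
exists n => //; rewrite ltNge; apply/negP => hnt.
have nL := index_le_freq_bound dos HL vn.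
have /andP[_ xn] := truncn_itv x0.
have := ler_wpM2l Bf0 (le_trans hnt (ler_norm t)).
rewrite /x in xn; lra.
Qed.

Section Tail.
Variable G : R.
Hypotheses (tauG : forall n, in_seq len n -> tau n <= G)
  (h_unb : forall t, exists2 n, in_seq len n & t < h n).

Lemma ends_unbounded t : exists2 n, in_seq len n & t < ends n.
Proof.
by have [n vn tn] := h_unb t; exists n => //; apply: lt_le_trans tn (h_le_ends dos vn).
Qed.

Lemma DurBounds_of_tail N B : (1 < N)%N ->
  (forall k, (N <= k)%N -> Bd_i len h tau k <= B) -> 0 <= B <= 1 -> DurBounds len h tau B.
Proof.
move=> N1 BdB /andP[B0 B1]; split; first by rewrite B0 B1.
have vN := in_seq_inf (ltnW N1).
have eN0 := ends_gt0 dos vN N1.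
have G0 := le_trans (tau_ge0 dos vN) (tauG vN).
exists (ends N + G + 1) => [|t t0]; first lra.
have Bt0 := mulr_ge0 B0 t0.
case: (ltP t (ends N)) => [tN|Nt].
  by apply: le_trans (mu_le len h tau t0) _; rewrite lee_fin; lra.
have [n Nn [vn [ent tn1]]] := window_exists (ends_homo dos) vN Nt (ends_unbounded t).
have vn1 := in_seq_inf (ltn0Sn n).
have n1 := leq_trans N1 Nn; have en0 := ends_gt0 dos vn n1.
apply: le_trans (mu_le_window dos (ltnW n1) vn1 ent (tn1 vn1)) _.
rewrite -(fineK (mu_fin_num len h tau (ltW en0))) (fine_mu_ends dos vn n1) -EFinD lee_fin.
have /andP[Bdn0 _] := Bd_i_ge0_le1 dos vn n1.
have := ler_pM Bdn0 (ltW en0) (BdB n Nn) ent.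
have := tauG vn1; lra.
Qed.

End Tail.

Lemma Bd_i_eventually_le B c : DurBounds len h tau B -> B < c ->
  (forall t, exists2 n, in_seq len n & t < h n) ->
  exists N, forall k, (N <= k)%N -> Bd_i len h tau k <= c.
Proof.
move=> [_ [kappa kappa0 muB]] Bc h_unb.
have [M vM hM] := h_unb (kappa / (c - B)).
exists M => k Mk.
have vk : in_seq len k by apply: in_seq_inf; case/andP: vM => M0 _; exact: leq_trans Mk.
have cB0 : 0 < c - B by rewrite subr_gt0.
have kappa_lt : kappa < (c - B) * ends k.
  rewrite mulrC -ltr_pdivrMr //.
  exact: lt_le_trans hM (le_trans (h_homo dos vM vk Mk) (h_le_ends dos vk)).
have ek0 : 0 < ends k by rewrite -(pmulr_rgt0 _ cB0) (lt_trans kappa0).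
rewrite /Bd_i ler_pdivrMr //.
apply: le_trans (fine_mu_le (ltW ek0) (muB _ (ltW ek0))) _.
by move: kappa_lt; rewrite mulrBl; lra.
Qed.

Variables (l : nat) (eps0 theta : R).
Hypotheses (l2 : (2 <= l)%N) (eps0_01 : 0 < eps0 < 1) (theta01 : 0 < theta < 1).

Lemma eventually_DurBounds B G : DurBounds len h tau B -> B < 1 ->
  (forall n, in_seq len n -> tau n <= G) ->
  (forall t, exists2 n, in_seq len n & t < h n) ->
  exists T, forall t, T <= t -> DurBounds len h tau (Bd_hat len h tau l eps0 theta t).
Proof.
move=> DB B1 tauG h_unb; have [th0 th1] := andP theta01; have [e0 e1] := andP eps0_01.
have B_lt : B < (1 + B) / 2 by lra.
have [N BdN] := Bd_i_eventually_le DB B_lt h_unb.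
set N' := maxn N l; have lN' : (l <= N')%N := leq_maxr N l.
set E := [set Bd_i len h tau k | k in [set k | (N' <= k)%N]].
have E0 : E !=set0 by exists (Bd_i len h tau N'), N' => /=.
have Eub : ubound E ((1 + B) / 2).
  by move=> _ [k Nk <-]; apply: BdN; exact: leq_trans (leq_maxl N l) Nk.
have hsup : has_sup E by split; last exists ((1 + B) / 2).
have supE1 : sup E < 1 by apply: le_lt_trans (ge_sup E0 Eub) _; lra.
have [_ [i Ni <-]] : exists2 x, E x & (sup E - (1 - theta)) / theta < x.
  by apply: sup_gt => //; rewrite ltr_pdivrMr //; nra.
rewrite ltr_pdivrMr // => supE_lt.
have vi : in_seq len i.
  by apply: in_seq_inf; exact: leq_trans (leq_trans (ltnW l2) lN') Ni.
exists (ends i) => t it.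
have [n iN wtn] := window_exists (ends_homo dos) vi it (ends_unbounded h_unb t).
have supE_hat : sup E <= Bd_hat len h tau l eps0 theta t.
  have li_n : (l <= i <= n)%N by rewrite (leq_trans lN' Ni) iN.
  by apply: (le_trans _ (Bd_hat_ge dos eps0 theta wtn li_n)); lra.
apply: (DurBounds_of_tail tauG h_unb (leq_trans l2 lN')) => [k Nk|].
  by apply: le_trans supE_hat; apply: sup_upper_bound => //; exists k.
by apply: Bd_hat_ge0_le1 => //; rewrite ?ltW.
Qed.

Lemma eventually_FreqBounds Bf : finFreqBound len h Bf ->
  exists T, forall t, T <= t -> FreqBounds len h (Bf_hat len h l eps0 theta t)%:E.
Proof.
move=> fB; have h_unb := h_unbounded fB; case: fB => Bf0 [L _ HL].
have [th0 th1] := andP theta01; have [e0 _] := andP eps0_01.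
have vl := in_seq_inf (ltnW l2); have hl0 := h_gt0 dos vl l2.
set E := [set Bf_i h k | k in [set k | (l <= k)%N]].
have E0 : E !=set0 by exists (Bf_i h l), l => /=.
have Eub : ubound E (L%:R / h l + Bf).
  move=> _ [k lk <-]; have vk := in_seq_inf (leq_trans (ltnW l2) lk).
  have hlk := h_homo dos vl vk lk; have hk0 := lt_le_trans hl0 hlk.
  rewrite /Bf_i ler_pdivrMr // mulrDl.
  rewrite (le_trans (index_le_freq_bound dos HL vk)) // lerD2r.
  by rewrite mulrAC ler_pdivlMr // ler_wpM2l.
have hsup : has_sup E by split; last exists (L%:R / h l + Bf).
have supE0 : 0 < sup E.
  apply: lt_le_trans (sup_upper_bound hsup (ex_intro2 _ _ l (leqnn l) erefl)).
  by rewrite divr_gt0 // ltr0n ltnW.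
have [_ [j lj <-] supE_lt] : exists2 x, E x & theta * sup E < x.
  by apply: sup_gt => //; rewrite gtr_pMl.
have vj := in_seq_inf (leq_trans (ltnW l2) lj).
exists (h j) => t jt.
have [n jn wtn] := window_exists (h_homo dos) vj jt (h_unb t).
have supE_hat : sup E <= Bf_hat len h l eps0 theta t.
  have lj_n : (l <= j <= n)%N by rewrite lj jn.
  apply: (le_trans _ (Bf_hat_ge dos eps0 theta wtn lj_n)).
  by rewrite ler_pdivlMr // mulrC ltW.
apply/FreqBounds_of_finFreqBound/(finFreqBound_of_tail dos l2) => [|k vk lk].
  exact: Bf_hat_ge0 (ltW e0).
by apply: le_trans supE_hat; apply: sup_upper_bound => //; exists k.
Qed.

End InfiniteSequence.

Theorem theorem1 (R : realType) (len : option nat) (h tau : nat -> R)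
  (l : nat) (eps0 theta : R) :
  DoS_seq len h tau -> ~ edge_case len h tau ->
  (2 <= l)%N -> 0 < eps0 < 1 -> 0 < theta < 1 ->
  exists T : R, 0 <= T /\
    forall t : R, T <= t ->
      DurBounds len h tau (Bd_hat len h tau l eps0 theta t) /\
      FreqBounds len h ((Bf_hat len h l eps0 theta t)%:E).
Proof.
move=> dos nedge l2 eps0_01 theta01.
have [/andP[e0 e1] /andP[th0 th1]] := (eps0_01, theta01).
have [[m len_m]|len_inf] : (exists m, len = Some m) \/ len = None.
  by case: len {dos nedge} => [m|]; [left; exists m | right].
- exists 0; split=> // t _; split.
    by apply: (DurBounds_finite dos len_m); apply: Bd_hat_ge0_le1; rewrite ?ltW.
  apply/FreqBounds_of_finFreqBound/(finFreqBound_finite h len_m).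
  exact: Bf_hat_ge0 (ltW e0).
- have [[B DB B1] [Bf fB] [G tauG]] := not_edge_case dos nedge.
  have [Td HTd] := eventually_DurBounds dos len_inf l2 eps0_01 theta01 DB B1 tauG
    (h_unbounded dos len_inf fB).
  have [Tf HTf] := eventually_FreqBounds dos len_inf l2 eps0_01 theta01 fB.
  exists (Num.max 0 (Num.max Td Tf)); split=> [|t]; first by rewrite le_max lexx.
  by rewrite !ge_max => /and3P[_ Tdt Tft]; split; [exact: HTd | exact: HTf].
Qed.
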